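(* For any real number field $K$ and any $a,b\in K$ with $a>0$ and $b\neq 0$, there exist $x,y,z,u,v,w\in K$ satisfying $$x^2 - ay^2 + au^2 - bv^2 + abw^2 = 0,\qquad z^2 - 4 = au^2,\qquad \mathbb{Q}\left(\tfrac{y}{u}\right) = \mathbb{Q}\left(\tfrac{y^2}{u^2}\right) = K,$$ and $$u\neq 0,\quad x + \frac{yz}{2u} > 2,\quad \frac{y}{u}>1,\quad z>2,\quad abw^2 - bv^2 > 4.$$
   Context: A real number field is a field $K\subset\mathbb{R}$ with $[K:\mathbb{Q}]<\infty$. *)

From HB Require Import structures.
From mathcomp Require Import all_boot all_order all_algebra.
From mathcomp Require Import classical_sets reals.
Set Implicit Arguments. Unset Strict Implicit. Unset Printing Implicit Defensive.
Import Order.TTheory GRing.Theory Num.Theory.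
Local Open Scope ring_scope.

Definition is_subfield (R : realType) (F : set R) : Prop :=
  [/\ F 1,
      (forall x y, F x -> F y -> F (x - y)),
      (forall x y, F x -> F y -> F (x * y)) &
      (forall x, F x -> x != 0 -> F x^-1)].

Definition finite_over_Q (R : realType) (F : set R) : Prop :=
  exists (n : nat) (e : 'I_n -> R),
    (forall i, F (e i)) /\
    (forall x, F x -> exists c : 'I_n -> rat, x = \sum_(i < n) ratr (c i) * e i).

Definition real_number_field (R : realType) (K : set R) : Prop :=
  is_subfield K /\ finite_over_Q K.

Definition Qadj (R : realType) (t : R) : set R :=
  fun x => forall F : set R, is_subfield F -> F t -> F x.

(* Pick k in K with Q(k^2) = K.  The primitive element theorem, in the form
   "Q(t y - x) contains x and y for all but finitely many rationals t", lets us
   choose positive rationals t2, t1, t in prescribed intervals such that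
   n := -a - b (t1^2 - a t2^2 k^2) is smaller than -a and generates K, and
   v := t^2 n lies in (-1, 0) with n in Q(v + 1/v).  The Cayley transform
   r := (1 - v) / (1 + v) > 1 satisfies v + 1/v = 4 / (1 - r^2) - 2, so r^2 also
   generates K; and (1 - v)^2 + 4 v = (1 + v)^2 gives the norm-one solution
   r^2 - a g1^2 - b g2^2 + a b g3^2 = 1 with (g1, g2, g3) = 2t (1, t1, t2 k) / (1 + v).
   Scaling it by u, for a point (u, z) of z^2 - a u^2 = 4 in K with u large,
   yields x, y, v, w with y / u = r, and the inequalities follow from u large. *)

From HB Require Import structures.
From mathcomp Require Import all_boot all_order all_algebra separable.
From mathcomp Require Import classical_sets reals.
From mathcomp Require Import ring lra zify.
Import Order.TTheory GRing.Theory Num.Theory.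
Local Open Scope classical_set_scope.
Local Open Scope ring_scope.
Set Implicit Arguments. Unset Strict Implicit.

Section Subfield.
Variables (R : realType) (F : set R).
Hypothesis sfF : is_subfield F.

Lemma subfield1 : F 1. Proof. by case: sfF. Qed.

Lemma subfieldB x y : F x -> F y -> F (x - y).
Proof. by case: sfF => _ + _ _; apply. Qed.

Lemma subfieldM x y : F x -> F y -> F (x * y).
Proof. by case: sfF => _ _ + _; apply. Qed.

Lemma subfield0 : F 0.
Proof. by rewrite -(subrr 1); apply: subfieldB; apply: subfield1. Qed.

Lemma subfieldN x : F x -> F (- x).
Proof. by move=> Fx; rewrite -sub0r; apply: subfieldB => //; apply: subfield0. Qed.

Lemma subfieldD x y : F x -> F y -> F (x + y).
Proof. by move=> Fx Fy; rewrite -(opprK y); apply: subfieldB => //; apply: subfieldN. Qed.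

Lemma subfieldV x : F x -> F x^-1.
Proof.
have [-> _|x0 Fx] := eqVneq x 0; first by rewrite invr0; apply: subfield0.
by case: sfF => _ _ _; apply.
Qed.

Lemma subfield_div x y : F x -> F y -> F (x / y).
Proof. by move=> Fx Fy; apply: subfieldM => //; apply: subfieldV. Qed.

Lemma subfieldX x n : F x -> F (x ^+ n).
Proof.
move=> Fx; elim: n => [|n IHn]; first by rewrite expr0; apply: subfield1.
by rewrite exprS; apply: subfieldM.
Qed.

Lemma subfield_nat n : F n%:R.
Proof.
elim: n => [|n IHn]; first exact: subfield0.
by rewrite -addn1 natrD; apply: subfieldD => //; apply: subfield1.
Qed.

Lemma subfield_int (m : int) : F m%:~R.
Proof.
by case: m => n; rewrite ?NegzE ?mulrNz; [|apply: subfieldN]; apply: subfield_nat.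
Qed.

Lemma subfield_rat (q : rat) : F (ratr q).
Proof.
by rewrite -(divq_num_den q) fmorph_div /= !ratr_int; apply: subfield_div; apply: subfield_int.
Qed.

Lemma subfield_sum I (r : seq I) (P : pred I) (f : I -> R) :
  (forall i, P i -> F (f i)) -> F (\sum_(i <- r | P i) f i).
Proof. by move=> Ff; apply: (big_ind F) => //; [apply: subfield0 | apply: subfieldD]. Qed.

Lemma subfield_horner (p : {poly rat}) x : F x -> F (map_poly ratr p).[x].
Proof.
move=> Fx; rewrite horner_coef; apply: subfield_sum => i _.
by rewrite coef_map; apply: subfieldM; [apply: subfield_rat | apply: subfieldX].
Qed.

End Subfield.

Ltac subfield_mem sfF :=
  repeat first [ assumption
  | apply: (subfield1 sfF) | apply: (subfield_nat sfF) | apply: (subfield_rat sfF)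
  | apply: (subfieldD sfF) | apply: (subfieldB sfF) | apply: (subfieldN sfF)
  | apply: (subfieldM sfF) | apply: (subfield_div sfF) | apply: (subfieldV sfF)
  | apply: (subfieldX sfF) ].

Section Adjunction.
Variable R : realType.
Implicit Types (t s : R) (F : set R).

Lemma Qadj_subfield t : is_subfield (Qadj t).
Proof.
split.
- by move=> F sfF _; apply: subfield1.
- by move=> x y Fx Fy F sfF Ft; apply: subfieldB => //; [apply: Fx | apply: Fy].
- by move=> x y Fx Fy F sfF Ft; apply: subfieldM => //; [apply: Fx | apply: Fy].
- by move=> x Fx _ F sfF Ft; apply: subfieldV => //; apply: Fx.
Qed.

Lemma Qadj_id t : Qadj t t. Proof. by []. Qed.

Lemma Qadj_min F t : is_subfield F -> F t -> Qadj t `<=` F.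
Proof. by move=> sfF Ft w; apply. Qed.

Lemma Qadj_sub t s : Qadj t s -> Qadj s `<=` Qadj t.
Proof. exact: Qadj_min (Qadj_subfield t). Qed.

Lemma Qadj_sqr_eq F t : is_subfield F -> F t -> F `<=` Qadj (t ^+ 2) ->
  Qadj t = F /\ Qadj (t ^+ 2) = F.
Proof.
move=> sfF Ft sFt2; have Ft2 := subfieldX sfF 2 Ft.
have sQt2 : Qadj (t ^+ 2) `<=` Qadj t.
  by apply: Qadj_sub; apply: (subfieldX (Qadj_subfield t)).
split; apply/seteqP; split.
- exact: Qadj_min.
- exact: subset_trans sQt2.
- exact: Qadj_min.
- exact: sFt2.
Qed.

End Adjunction.

(* [Qadj t t] unfolds to a product, whose binders must not become implicit. *)
Arguments Qadj_id {R} t.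

Lemma algebraic_span_powers (R : numFieldType) n (e : 'I_n -> R) (w : R) :
  (forall j : 'I_n.+1, exists c : 'I_n -> rat, w ^+ j = \sum_(i < n) ratr (c i) * e i) ->
  algebraicOver ratr w.
Proof.
move=> /boolp.choice[c Dw].
pose A : 'M[rat]_(n.+1, n) := \matrix_(j, i) c j i.
have /rowV0Pn[v /sub_kermxP vA nz_v] : kermx A != 0.
  by rewrite -mxrank_eq0 mxrank_ker; have := rank_leq_col A; lia.
exists (\poly_(j < n.+1) v 0 (inord j)).
  apply: contra nz_v => /eqP v0; apply/eqP/rowP => j.
  by have := congr1 (coefp j) v0; rewrite /= coef_poly ltn_ord coef0 inord_val !mxE.
rewrite /root (horner_coef_wide (n := n.+1)) ?size_map_poly ?size_poly //.
under eq_bigr => j _ do rewrite coef_map coef_poly ltn_ord /= inord_val Dw big_distrr.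
rewrite exchange_big big1 //= => i _.
transitivity (ratr ((v *m A) 0 i) * e i); last by rewrite vA mxE rmorph0 mul0r.
rewrite !mxE rmorph_sum mulr_suml; apply: eq_bigr => j _.
by rewrite !mxE rmorphM mulrA.
Qed.

Lemma rnf_algebraic (R : realType) (K : set R) w :
  real_number_field K -> K w -> algebraicOver ratr w.
Proof.
case=> sfK [n [e [_ span_e]]] Kw.
by apply: (algebraic_span_powers (e := e)) => j; apply: span_e; apply: subfieldX.
Qed.

Lemma algebraic_separable (R : numFieldType) (x : R) : algebraicOver ratr x ->
  exists2 q : {poly rat}, separable_poly q & root (map_poly ratr q) x.
Proof.
(* If p is not separable, x is a root of one of the smaller factors
   gcd(p, p') and p / gcd(p, p'); p' <> 0 because rat has characteristic 0. *)
case=> p; elim: {p}(size p) {-2}p (leqnn (size p)) => [|n IHn] p.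
  by rewrite leqn0 size_poly_eq0 => /eqP->; rewrite eqxx.
move=> sz_p nz_p px0.
have [sep_p|] := boolP (coprimep p p^`()); first by exists p; rewrite // unlock.
rewrite coprimep_def; set g := gcdp p p^`() => g_nunit.
have Dp : p = p %/ g * g by rewrite divpK ?dvdp_gcdl.
have nz_g : g != 0 by rewrite gcdp_eq0 negb_and nz_p.
have g_gt1 : (1 < size g)%N by rewrite ltn_neqAle eq_sym g_nunit lt0n size_poly_eq0.
have p_gt1 : (1 < size p)%N.
  rewrite ltnNge; apply: contraTN px0 => /size1_polyC Dp1.
  by rewrite Dp1 map_polyC rootC fmorph_eq0 -polyC_eq0 -Dp1.
have nz_p' : p^`() != 0.
  apply/eqP => /(congr1 (coefp (size p).-2))/eqP; rewrite /= coef_deriv coef0.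
  have -> : (size p).-2.+1 = (size p).-1 by lia.
  by rewrite mulrn_eq0 -lead_coefE lead_coef_eq0 (negPf nz_p) orbF; lia.
have size_g : (size g < size p)%N.
  exact: leq_ltn_trans (leq_gcdpr _ nz_p') (lt_size_deriv nz_p).
have [nz_h size_h] : p %/ g != 0 /\ (size (p %/ g)%R < size p)%N.
  split; first by apply: contra nz_p => /eqP h0; rewrite Dp h0 mul0r.
  by rewrite size_divp // ltn_subrL -subn1 subn_gt0 g_gt1 (ltn_trans _ p_gt1).
have le_n (q : {poly rat}) : (size q < size p)%N -> (size q <= n)%N.
  by move=> lt_qp; rewrite -ltnS (leq_trans lt_qp).
move: px0; rewrite Dp rmorphM rootM => /orP[] root_x.
- exact: IHn _ (le_n _ size_h) nz_h root_x.
- exact: IHn _ (le_n _ size_g) nz_g root_x.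
Qed.

Section PrimitiveElement.
Variable R : realType.

Lemma algebraic_PET (x y : R) : algebraicOver ratr x -> algebraicOver ratr y ->
  exists2 r : {poly R}, r != 0 & forall t : rat, ~~ root r (ratr t) ->
    Qadj (ratr t * y - x) x /\ Qadj (ratr t * y - x) y.
Proof.
move=> [p nz_p px0] /algebraic_separable[q sep_q qy0].
have [r nz_r PETxy] := large_field_PET nz_p px0 qy0 sep_q.
exists r => // t /PETxy[[px Dx] [py Dy]].
have Qz p := subfield_horner (Qadj_subfield (ratr t * y - x)) p (Qadj_id _).
by split; [have := Qz px; rewrite Dx | have := Qz py; rewrite Dy].
Qed.

Lemma exists_rat_nonroot (r : {poly R}) (a b : R) : r != 0 -> a < b ->
  exists q : rat, a < ratr q < b /\ ~~ root r (ratr q).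
Proof.
move=> nz_r lt_ab.
have [c] := rat_in_itvoo lt_ab; rewrite in_itv /= => /andP[ac cb].
have [d] := rat_in_itvoo cb; rewrite in_itv /= => /andP[cd db].
pose h (i : nat) := (ratr d - ratr c) / i.+1%:R : R.
pose q i := ratr c + h i.
have q_itv i : a < q i < b.
  have h_gt0 : 0 < h i by rewrite divr_gt0 ?subr_gt0.
  have h_le : h i <= ratr d - ratr c.
    by rewrite ler_pdivrMr ?ler_peMr ?ler1n ?subr_ge0 ?ltW.
  rewrite /q; apply/andP; split; lra.
have q_rat i : q i = ratr (c + (d - c) / i.+1%:R).
  by rewrite /q /h rmorphD fmorph_div rmorphB /= ratr_nat.
have q_inj : injective q.
  have nz_dc : ratr d - ratr c != 0 :> R by rewrite subr_eq0 gt_eqF.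
  move=> i j; rewrite /q /h => /addrI/(mulfI nz_dc)/invr_inj/eqP.
  by rewrite eqr_nat => /eqP[].
have : ~~ all (root r) [seq q i | i <- iota 0 (size r)].
  apply/negP => /(max_poly_roots nz_r)/implyP.
  by rewrite map_inj_uniq // iota_uniq size_map size_iota ltnn.
case/allPn => _ /mapP[i _ ->] nroot.
by exists (c + (d - c) / i.+1%:R); rewrite -q_rat; split; [apply: q_itv | apply: nroot].
Qed.

Lemma exists_rat_PET (x y a b : R) (e : nat) :
  algebraicOver ratr x -> algebraicOver ratr y -> (0 < e)%N -> a < b ->
  exists q : rat, a < ratr q < b /\
    Qadj (ratr q ^+ e * y - x) x /\ Qadj (ratr q ^+ e * y - x) y.
Proof.
move=> ax ay e_gt0 lt_ab; have [r nz_r PETxy] := algebraic_PET ax ay.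
have nz_re : r \Po 'X^e != 0 by rewrite comp_poly_eq0 ?size_polyXn.
have [q [q_ab]] := exists_rat_nonroot nz_re lt_ab.
rewrite /root horner_comp hornerXn -rmorphXn => /PETxy.
by rewrite rmorphXn; exists q.
Qed.

End PrimitiveElement.

Lemma sqr_between_sqrt (R : rcfType) (A B t : R) :
  0 <= A -> Num.sqrt A < t < Num.sqrt B -> 0 < t /\ A < t ^+ 2 < B.
Proof.
move=> A_ge0 /andP[At tB]; have t_gt0 := le_lt_trans (sqrtr_ge0 A) At.
have B_gt0 : 0 < B by rewrite -sqrtr_gt0 (lt_trans t_gt0).
have sqrtA := sqr_sqrtr A_ge0; have sqrtB := sqr_sqrtr (ltW B_gt0).
have := sqrtr_ge0 A; split=> //; apply/andP; split; nra.
Qed.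

Definition cayley (R : fieldType) (v : R) := (1 - v) / (1 + v).

Lemma cayley_norm_one (R : fieldType) (a b t t1 s : R)
    (v := t ^+ 2 * (- a - b * (t1 ^+ 2 - a * s ^+ 2))) : 1 + v != 0 ->
  cayley v ^+ 2 - a * (2 * t / (1 + v)) ^+ 2 - b * (2 * t * t1 / (1 + v)) ^+ 2
    + a * b * (2 * t * s / (1 + v)) ^+ 2 = 1.
Proof. by rewrite /cayley /v => v1; field. Qed.

Lemma Qadj_cayley_sqr (R : realType) (v : R) :
  v != 0 -> 1 + v != 0 -> Qadj (cayley v ^+ 2) (v + v^-1).
Proof.
move=> v0 v1; have sfC := Qadj_subfield (cayley v ^+ 2).
have C_C := Qadj_id (cayley v ^+ 2).
have -> : v + v^-1 = 4 / (1 - cayley v ^+ 2) - 2.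
  have -> : 1 - cayley v ^+ 2 = 4 * v / (1 + v) ^+ 2 by rewrite /cayley; field.
  by field; rewrite v0 v1.
by subfield_mem sfC.
Qed.

(* Rational parametrisation of z^2 - a u^2 = 4 through (2, 0) by the slope
   1 / l; u grows without bound as a l^2 decreases to 1. *)
Lemma exists_pell_point (R : realType) (F : set R) (a M : R) :
  is_subfield F -> F a -> 0 < a ->
  exists u z, [/\ F u, F z, z ^+ 2 - 4 = a * u ^+ 2, 2 < z & M < u].
Proof.
move=> sfF Fa a_gt0; pose s0 := Num.sqrt a^-1; pose m := Num.max M 1.
have s0_gt0 : 0 < s0 by rewrite sqrtr_gt0 invr_gt0.
have m_gt0 : 0 < m by rewrite lt_max ltr01 orbT.
pose d := 4 * s0 / m.
have d_gt0 : 0 < d by rewrite divr_gt0 ?mulr_gt0.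
have lt_sqrt : s0 < Num.sqrt ((1 + d) / a).
  by rewrite ltr_sqrt ?divr_gt0 ?addr_gt0 // -[X in X < _]mul1r ltr_pM2r ?invr_gt0 // ltrDl.
have [q] := rat_in_itvoo lt_sqrt; rewrite in_itv /= => q_itv.
have ainv_ge0 : 0 <= a^-1 by rewrite invr_ge0 ltW.
have [q_gt0 /andP[lo hi]] := sqr_between_sqrt ainv_ge0 q_itv.
set l := ratr q in q_itv q_gt0 lo hi.
have D_gt0 : 0 < a * l ^+ 2 - 1.
  by have := mulVf (lt0r_neq0 a_gt0); nra.
have D_lt : a * l ^+ 2 - 1 < d.
  by move: hi; rewrite ltr_pdivlMr // mulrC; lra.
exists (4 * l / (a * l ^+ 2 - 1)), (2 * (a * l ^+ 2 + 1) / (a * l ^+ 2 - 1)).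
split; try by subfield_mem sfF.
- by field; rewrite lt0r_neq0.
- by rewrite ltr_pdivlMr //; lra.
have md : m * d = 4 * s0 by rewrite /d; field; rewrite lt0r_neq0.
have Mm : M <= m by rewrite le_max lexx.
by rewrite ltr_pdivlMr //; nra.
Qed.

Section RealNumberField.
Variables (R : realType) (K : set R).
Hypothesis rnfK : real_number_field K.

Let sfK : is_subfield K := rnfK.1.
Let algK w : K w -> algebraicOver ratr w := rnf_algebraic rnfK (w := w).

Lemma rnf_primitive : exists2 th, K th & K `<=` Qadj th.
Proof.
have [_ [n [e [Ke span_e]]]] := rnfK.
suff [th Kth e_th] : exists2 th, K th & forall i : 'I_n, Qadj th (e i).
  exists th => // w /span_e[c ->]; apply: (subfield_sum (Qadj_subfield th)) => i _.
  have sfQ := Qadj_subfield th.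
  by apply: (subfieldM sfQ); [apply: (subfield_rat sfQ) | apply: e_th].
have: forall k, (k <= n)%N ->
    exists2 th, K th & forall i : 'I_n, (i < k)%N -> Qadj th (e i).
  elim=> [_ | k IHk lt_kn]; first by exists 0; [apply: subfield0 |].
  have [th Kth e_th] := IHk (ltnW lt_kn); have Kek := Ke (Ordinal lt_kn).
  have [q [_ [th_z ek_z]]] := exists_rat_PET (e := 1) (algK Kth) (algK Kek) isT ltr01.
  exists (ratr q ^+ 1 * e (Ordinal lt_kn) - th); first by subfield_mem sfK.
  move=> i; rewrite ltnS leq_eqVlt => /predU1P[ik | lt_ik].
    by have -> : i = Ordinal lt_kn by apply: val_inj.
  exact: Qadj_sub th_z _ (e_th i lt_ik).
by move=> /(_ n (leqnn n))[th Kth e_th]; exists th => // i; apply: e_th.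
Qed.

Lemma rnf_primitive_sqr : exists k, [/\ K k, k != 0 & K `<=` Qadj (k ^+ 2)].
Proof.
have [th Kth sK_th] := rnf_primitive; have Kth2 := subfieldX sfK 2 Kth.
have lt_th : 2 * th < 2 * th + 1 by lra.
have [q [/andP[q_gt _] [_ th_z]]] := exists_rat_PET (e := 1) (algK Kth2) (algK Kth) isT lt_th.
pose k := th - ratr q / 2.
exists k; split; first by rewrite /k; subfield_mem sfK.
  by rewrite /k subr_eq0; apply: contraTneq q_gt => ->; lra.
apply: subset_trans sK_th _; apply: Qadj_sub; apply: Qadj_sub th_z.
have -> : ratr q ^+ 1 * th - th ^+ 2 = (ratr q / 2) ^+ 2 - k ^+ 2 by rewrite /k; field.
have k2 := Qadj_id (k ^+ 2); by subfield_mem (Qadj_subfield (k ^+ 2)).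
Qed.

Lemma exists_cayley_generator n : K n -> n < 0 ->
  exists t, [/\ K t, 0 < t, -1 < t ^+ 2 * n & Qadj n `<=` Qadj (cayley (t ^+ 2 * n) ^+ 2)].
Proof.
move=> Kn n_lt0; have Kn' : K (- n^-1) by subfield_mem sfK.
have lt_sqrt : Num.sqrt 0 < Num.sqrt (- n^-1) by rewrite sqrtr0 sqrtr_gt0 oppr_gt0 invr_lt0.
have [q [q_itv [_ n_z]]] := exists_rat_PET (e := 4) (algK Kn') (algK Kn) isT lt_sqrt.
have [t_gt0 /andP[_ t2_lt]] := sqr_between_sqrt (lexx 0) q_itv.
set t := ratr q in q_itv n_z t_gt0 t2_lt *; set v := t ^+ 2 * n.
have v_gt : -1 < v.
  have : t ^+ 2 * - n < - n^-1 * - n by rewrite ltr_pM2r // oppr_gt0.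
  by rewrite mulrNN mulVf ?lt_eqF // mulrN /v; lra.
have v_lt0 : v < 0 by rewrite /v pmulr_rlt0 // exprn_gt0.
have v1_gt0 : 0 < 1 + v by lra.
exists t; split => //; first exact: subfield_rat sfK q.
apply: Qadj_sub; apply: Qadj_sub n_z.
have -> : t ^+ 4 * n - - n^-1 = t ^+ 2 * (v + v^-1).
  by rewrite /v; field; rewrite lt_eqF //= gt_eqF.
have C_v := Qadj_cayley_sqr (ltr0_neq0 v_lt0) (lt0r_neq0 v1_gt0).
by subfield_mem (Qadj_subfield (cayley v ^+ 2)).
Qed.

Lemma exists_form_value_generator a b k :
  K a -> K b -> K k -> 0 < a -> b != 0 -> k != 0 ->
  exists t1 s, [/\ K t1, K s, 0 < b * (t1 ^+ 2 - a * s ^+ 2)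
    & Qadj (k ^+ 2) `<=` Qadj (- a - b * (t1 ^+ 2 - a * s ^+ 2))].
Proof.
move=> Ka Kb Kk a_gt0 b0 k0; pose Z := a * b * k ^+ 2.
have KZ : K Z by subfield_mem sfK.
have [q2 [/andP[q2_gt0 _] [W_a W_Z]]] := exists_rat_PET (e := 2) (algK Ka) (algK KZ) isT ltr01.
set t2 := ratr q2 in q2_gt0 W_a W_Z; set W := t2 ^+ 2 * Z - a in W_a W_Z.
pose c := a * (t2 * k) ^+ 2.
have c_gt0 : 0 < c by rewrite /c mulr_gt0 // exprn_even_gt0 //= mulf_neq0 // lt0r_neq0.
have [A [B [A_ge0 lt_AB P_gt0]]] : exists A B, [/\ 0 <= A, A < B &
    forall x, A < x ^+ 2 < B -> 0 < b * (x ^+ 2 - c)].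
  have [b_gt0|b_le0] := ltP 0 b.
    exists c, (c + 1); split; [exact: ltW | lra |] => x /andP[cx _].
    by rewrite mulr_gt0 // subr_gt0.
  have b_lt0 : b < 0 by rewrite lt_neqAle b0.
  exists 0, c; split => // x /andP[_ xc].
  by rewrite nmulr_rgt0 // subr_lt0.
have Kmb : K (- b) by subfield_mem sfK.
have KmW : K (- W) by rewrite /W; subfield_mem sfK.
have lt_sqrt : Num.sqrt A < Num.sqrt B by rewrite ltr_sqrt ?(le_lt_trans A_ge0).
have [q1 [q1_itv [n_W n_b]]] := exists_rat_PET (e := 2) (algK KmW) (algK Kmb) isT lt_sqrt.
have [_ q1_sqr] := sqr_between_sqrt A_ge0 q1_itv.
exists (ratr q1), (t2 * k); split; [exact: subfield_rat | subfield_mem sfK | exact: P_gt0 |].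
have -> : - a - b * (ratr q1 ^+ 2 - a * (t2 * k) ^+ 2) = ratr q1 ^+ 2 * - b - - W.
  by rewrite /W /Z; ring.
set n := ratr q1 ^+ 2 * - b - - W in n_W n_b *; have sfN := Qadj_subfield n.
have N_W := subfieldN sfN n_W; have N_b := subfieldN sfN n_b; rewrite !opprK in N_W N_b.
have N_a := Qadj_sub N_W W_a; have N_Z := Qadj_sub N_W W_Z.
apply: (Qadj_min sfN).
have -> : k ^+ 2 = Z / (a * b) by rewrite /Z; field; rewrite b0 lt0r_neq0.
by subfield_mem sfN.
Qed.

Lemma exists_norm_one_generator a b : K a -> K b -> 0 < a -> b != 0 ->
  exists r g1 g2 g3, [/\ K r, K g1, K g2 & K g3] /\
    [/\ r ^+ 2 - a * g1 ^+ 2 - b * g2 ^+ 2 + a * b * g3 ^+ 2 = 1, 1 < r, 0 < g1,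
        0 < b * (g2 ^+ 2 - a * g3 ^+ 2) & K `<=` Qadj (r ^+ 2)].
Proof.
move=> Ka Kb a_gt0 b0; have [k [Kk k0 sK_k]] := rnf_primitive_sqr.
have [t1 [s [Kt1 Ks P_gt0 sk_n]]] := exists_form_value_generator Ka Kb Kk a_gt0 b0 k0.
set P := b * _ in P_gt0 sk_n; set n := - a - P in sk_n.
have Kn : K n by rewrite /n /P; subfield_mem sfK.
have n_lt0 : n < 0 by rewrite /n; lra.
have [t [Kt t_gt0 v_gt sn_c]] := exists_cayley_generator Kn n_lt0.
set v := t ^+ 2 * n in v_gt sn_c.
have v_lt0 : v < 0 by rewrite /v pmulr_rlt0 ?exprn_gt0.
have v1_gt0 : 0 < 1 + v by lra.
exists (cayley v), (2 * t / (1 + v)), (2 * t * t1 / (1 + v)), (2 * t * s / (1 + v)).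
split; first by split; rewrite ?/cayley; subfield_mem sfK.
split.
- exact: cayley_norm_one (lt0r_neq0 v1_gt0).
- by rewrite /cayley ltr_pdivlMr // mul1r; lra.
- by rewrite divr_gt0 // mulr_gt0.
- have -> : b * ((2 * t * t1 / (1 + v)) ^+ 2 - a * (2 * t * s / (1 + v)) ^+ 2)
      = 4 * t ^+ 2 * P / (1 + v) ^+ 2 by rewrite /P; field; rewrite lt0r_neq0.
  by rewrite divr_gt0 ?exprn_gt0 // pmulr_lgt0 // pmulr_rgt0 ?exprn_gt0.
- exact: subset_trans sK_k (subset_trans sk_n sn_c).
Qed.

End RealNumberField.

Lemma scaled_norm_form_eq0 (R : comRingType) (a b r g1 g2 g3 u : R) :
  r ^+ 2 - a * g1 ^+ 2 - b * g2 ^+ 2 + a * b * g3 ^+ 2 = 1 ->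
  (a * u * g1) ^+ 2 - a * (u * r) ^+ 2 + a * u ^+ 2
    - b * (a * u * g3) ^+ 2 + a * b * (u * g2) ^+ 2 = 0.
Proof.
move=> norm1; transitivity (- (a * u ^+ 2) *
  (r ^+ 2 - a * g1 ^+ 2 - b * g2 ^+ 2 + a * b * g3 ^+ 2 - 1)); first by ring.
by rewrite norm1 subrr mulr0.
Qed.

Theorem theorem4p1 (R : realType) (K : set R) (a b : R) :
  real_number_field K -> K a -> K b -> 0 < a -> b != 0 ->
  exists x y z u v w : R,
    [/\ K x, K y, K z & K u] /\ K v /\ K w /\
    [/\ x ^+ 2 - a * y ^+ 2 + a * u ^+ 2 - b * v ^+ 2 + a * b * w ^+ 2 = 0,
        z ^+ 2 - 4 = a * u ^+ 2,
        Qadj (y / u) = K &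
        Qadj (y ^+ 2 / u ^+ 2) = K] /\
    [/\ u != 0,
        2 < x + y * z / (2 * u),
        1 < y / u,
        2 < z &
        4 < a * b * w ^+ 2 - b * v ^+ 2].
Proof.
move=> rnfK Ka Kb a_gt0 b0; have sfK := rnfK.1.
have [r [g1 [g2 [g3 [[Kr Kg1 Kg2 Kg3] [norm1 r_gt1 g1_gt0 d_gt0 sK_r]]]]]] :=
  exists_norm_one_generator rnfK Ka Kb a_gt0 b0.
set d := b * _ in d_gt0.
have [u [z [Ku Kz pell z_gt2]]] :=
  exists_pell_point (Num.max 1 (Num.max (a * g1)^-1 (4 / (a * d)))) sfK Ka a_gt0.
rewrite !gt_max => /and3P[u_gt1 u_g1 u_d].
have g1u : 1 < a * g1 * u by rewrite -ltr_pdivrMl ?mulr_gt0 // mulr1.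
have ad_gt0 := mulr_gt0 a_gt0 d_gt0; rewrite ltr_pdivrMr // in u_d.
have u0 : u != 0 by rewrite lt0r_neq0 // (lt_trans ltr01).
have [Qr Qr2] := Qadj_sqr_eq sfK Kr sK_r.
have ur_u : u * r / u = r by field.
have ur_u2 : (u * r) ^+ 2 / u ^+ 2 = r ^+ 2 by field.
exists (a * u * g1), (u * r), z, u, (a * u * g3), (u * g2); rewrite ur_u ur_u2.
do 3 (split; first by do ?split; subfield_mem sfK).
split; [split => //; exact: scaled_norm_form_eq0 | split => //].
- rewrite (_ : u * r * z / (2 * u) = r * z / 2) ?(mulrAC a u); last by field.
  have : 2 < r * z by nra.
  lra.
- rewrite (_ : _ - _ = u * (a * d) * u); last by rewrite /d; ring.
  by have := ltr_pM (ler0n _ 4) ler01 u_d u_gt1; rewrite mulr1.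
Qed.
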